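(* Let $k \geq 3$ and $n \geq 2k - 4$ be integers, and let $H$ be an $n$-vertex $k$-graph with $\delta_{k-1}(H) > n/3$ and a vertex partition $\{A, B\}$ of $V(H)$ with $|A|, |B| > 0$. Suppose that $H$ contains no $(A,B)$-diamond. Then $H$ contains a proto-balancer.
   Context: $\delta_{k-1}(H)$ is the minimum over $(k-1)$-subsets of $V(H)$ of the number of edges containing it. For $x,y \in V(H)$, an $(x,y)$-diamond is a pair of edges $e,f$ with $|e\cap f| = k-1$, $x \in e \setminus f$, $y \in f \setminus e$; an $(A,B)$-diamond is an $(x,y)$-diamond with $x \in A$, $y \in B$. An $(A,B)$-proto-balancer in $H$ is given by a $(k-3)$-set $S \subseteq V(H)$ and three $3$-sets $X_1, X_2, X_3 \subseteq V(H)\setminus S$ such that: $S \cup X_i \in E(H)$ for all $i \in [3]$; $|X_1 \cap A| = |X_2 \cap A| = |X_1 \cap X_2| = |X_1 \cap X_2 \cap A| = 2$; $|X_3 \cap A| = 0$; and $|X_1 \cap X_3| = |X_2 \cap X_3| = 1$ (the proto-balancer is the subgraph with edges $S\cup X_1, S \cup X_2, S\cup X_3$). A $(B,A)$-proto-balancer is defined in the same way with the roles of $A$ and $B$ exchanged. A proto-balancer is an $(A,B)$-proto-balancer or a $(B,A)$-proto-balancer. *)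

From mathcomp Require Import all_boot.
Set Implicit Arguments. Unset Strict Implicit. Unset Printing Implicit Defensive.

Definition is_kgraph (T : finType) (k : nat) (E : {set {set T}}) : Prop :=
  forall e, e \in E -> #|e| = k.

Definition codeg (T : finType) (E : {set {set T}}) (S : {set T}) : nat :=
  #|[set e in E | S \subset e]|.

(* delta_{k-1}(H): minimum over (k-1)-subsets S of V(H) of codeg S.
   (#|E| is used as the neutral element; it is >= every codegree, so this is
   exactly the minimum whenever a (k-1)-subset exists.) *)
Definition min_codeg (T : finType) (k : nat) (E : {set {set T}}) : nat :=
  \big[minn/#|E|]_(S : {set T} | #|S| == k.-1) codeg E S.

Definition diamond (T : finType) (k : nat) (E : {set {set T}}) (x y : T) : Prop :=
  exists e f, [/\ e \in E, f \in E, #|e :&: f| = k.-1,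
                  x \in e :\: f & y \in f :\: e].

Definition AB_diamond (T : finType) (k : nat) (E : {set {set T}})
  (A B : {set T}) : Prop :=
  exists x y, [/\ x \in A, y \in B & diamond k E x y].

Definition AB_proto_balancer (T : finType) (k : nat) (E : {set {set T}})
  (A B : {set T}) : Prop :=
  exists (S X1 X2 X3 : {set T}),
    [/\ #|S| = k - 3,
        [/\ #|X1| = 3, #|X2| = 3 & #|X3| = 3],
        [/\ [disjoint X1 & S], [disjoint X2 & S] & [disjoint X3 & S]]
      & [/\ S :|: X1 \in E, S :|: X2 \in E & S :|: X3 \in E]] /\
    [/\ [/\ #|X1 :&: A| = 2, #|X2 :&: A| = 2, #|X1 :&: X2| = 2
          & #|X1 :&: X2 :&: A| = 2],
        #|X3 :&: A| = 0 &
        [/\ #|X1 :&: X3| = 1 & #|X2 :&: X3| = 1]].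

Definition proto_balancer (T : finType) (k : nat) (E : {set {set T}})
  (A B : {set T}) : Prop :=
  AB_proto_balancer k E A B \/ AB_proto_balancer k E B A.

From HB Require Import structures.
From mathcomp Require Import all_boot zify.
Set Implicit Arguments. Unset Strict Implicit. Unset Printing Implicit Defensive.

(* Fix a (k-3)-set S and let link p q be the neighbourhood of the (k-1)-set
   S ∪ {p, q}.  A link of a pair p ≠ q outside S has at least δ > n/3 vertices,
   and without an (A,B)-diamond every link lies inside A or inside B.  From
   a ∈ A, x ∈ B and a vertex of link a x we get a, a' on one side C and x on the
   other with x ∈ link a a'.  Take x' ≠ x in link a a' and y ∈ link x x'.  If
   y ∉ C, then {a,a',x}, {a,a',x'}, {x,x',y} form a proto-balancer; otherwise
   take y' ≠ y in link x x' and z ∈ link y y', and if z ∈ C, then {x,x',y},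
   {x,x',y'}, {y,y',z} form one with the sides exchanged.  In the remaining case
   link x a, link x x' are disjoint subsets of C and link y y', link y x are
   disjoint subsets of its complement, so 4δ ≤ n, contradicting n < 3δ. *)

HB.instance Definition _ := SemiGroup.isComLaw.Build nat minn minnA minnC.

Lemma set1I (T : finType) (x : T) (Y : {set T}) :
  [set x] :&: Y = if x \in Y then [set x] else set0.
Proof. by case: ifP => xY; apply/setP => y; rewrite !inE; case: eqP => // ->. Qed.

Lemma card_set3_le (T : finType) (a b c : T) : #|[set a; b; c]| <= 3.
Proof. by rewrite setUC cardsU1 cards2; case: (_ \notin _); case: (a != b). Qed.

Section Neighbourhood.
Variables (T : finType) (k : nat) (E : {set {set T}}).

Definition nbhd (W : {set T}) : {set T} := [set v | (v \notin W) && (v |: W \in E)].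

Lemma min_codeg_le (W : {set T}) : #|W| = k.-1 -> min_codeg k E <= codeg E W.
Proof. by move=> cardW; rewrite /min_codeg (bigD1 W) ?cardW //= geq_minl. Qed.

Lemma codeg_le_card_nbhd (W : {set T}) :
  is_kgraph k E -> 0 < k -> #|W| = k.-1 -> codeg E W <= #|nbhd W|.
Proof.
move=> kgraphE k_gt0 cardW; apply: leq_trans (leq_imset_card (fun v => v |: W) _).
apply/subset_leq_card/subsetP => e; rewrite inE => /andP [eE sWe].
have /cards1P [v eDW] : #|e :\: W| == 1.
  by rewrite cardsD (setIidPr sWe) (kgraphE e eE) cardW; apply/eqP; lia.
have /setDP [_ vNW] : v \in e :\: W by rewrite eDW set11.
have e_eq : e = v |: W by rewrite -(setID e W) (setIidPr sWe) eDW setUC.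
by rewrite e_eq in eE *; apply: imset_f; rewrite inE vNW.
Qed.

Lemma diamond_nbhd (W : {set T}) u v :
  #|W| = k.-1 -> u \in nbhd W -> v \in nbhd W -> u != v -> diamond k E u v.
Proof.
rewrite !inE => cardW /andP [uNW uWE] /andP [vNW vWE] uv.
exists (u |: W), (v |: W); split=> //.
- by rewrite -setUIl set1I inE (negbTE uv) set0U.
- by rewrite !inE eqxx negb_or uv uNW.
- by rewrite !inE eqxx negb_or eq_sym uv vNW.
Qed.

Lemma nbhd_same_side (A W : {set T}) u v :
  ~ AB_diamond k E A (~: A) -> #|W| = k.-1 ->
  u \in nbhd W -> v \in nbhd W -> (u \in A) = (v \in A).
Proof.
move=> noDiamond cardW.
suff sideA x y : x \in nbhd W -> y \in nbhd W -> x \in A -> y \in A.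
  by move=> uW vW; apply/idP/idP; apply: sideA.
move=> xW yW xA; apply/idPn => yNA; apply: noDiamond; exists x, y.
split; rewrite ?inE //; apply: diamond_nbhd cardW xW yW _.
by apply: contraNneq yNA => <-.
Qed.

End Neighbourhood.

Section Link.
Variables (T : finType) (k : nat) (E : {set {set T}}) (S : {set T}).
Hypotheses (kgraphE : is_kgraph k E) (k_ge3 : 3 <= k) (cardS : #|S| = k - 3).

Definition link (p q : T) : {set T} := nbhd E (S :|: [set p; q]).

Lemma edge_fresh (X : {set T}) :
  S :|: X \in E -> #|X| <= 3 -> #|X| = 3 /\ [disjoint X & S].
Proof.
move=> /kgraphE; rewrite cardsU cardS => cardSX cardX.
have SX0 : #|S :&: X| = 0 by lia.
by split; [lia | rewrite -setI_eq0 setIC -cards_eq0 SX0].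
Qed.

Lemma mem_link p q v : (v \in link p q) = (S :|: [set p; q; v] \in E).
Proof.
rewrite inE; have -> : v |: (S :|: [set p; q]) = S :|: [set p; q; v].
  by rewrite setUCA [[set v] :|: _]setUC.
apply/andP/idP => [[] // | pqvE]; split=> //.
have [] := edge_fresh pqvE (card_set3_le p q v).
rewrite [[set p; q; v]]setUC cardsU1 cards2 => card3 disjS.
rewrite in_setU negb_or (disjointFr disjS) ?setU11 //=.
by move: card3; case: (v \in _); case: (p != q).
Qed.

Lemma linkC p q : link p q = link q p.
Proof. by rewrite /link (setUC [set p]). Qed.

Lemma mem_link_swap p q v : (v \in link p q) = (q \in link p v).
Proof. by rewrite !mem_link -!setUA (setUC [set q]). Qed.

Lemma link_triple p q v :
  v \in link p q -> #|[set p; q; v]| = 3 /\ [disjoint [set p; q; v] & S].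
Proof. by rewrite mem_link => /edge_fresh; apply; apply: card_set3_le. Qed.

Lemma link_fresh p q v : v \in link p q -> [/\ p != q, p \notin S & q \notin S].
Proof.
move=> vL; have [_ disjS] := link_triple vL.
rewrite !(disjointFr disjS) ?inE ?eqxx ?orbT //; split=> //.
have [+ _] := link_triple vL.
by rewrite setUC cardsU1 cards2; case: eqP => // ->; case: (_ \notin _).
Qed.

Lemma link_notin p q v : v \in link p q -> v \notin S.
Proof. by rewrite mem_link_swap => /link_fresh []. Qed.

Lemma card_link_base p q :
  p != q -> p \notin S -> q \notin S -> #|S :|: [set p; q]| = k.-1.
Proof.
move=> pq pS qS; rewrite cardsU cards2 pq.
have /disjoint_setI0 -> : [disjoint S & [set p; q]].
  by rewrite disjoint_sym disjoints_subset subUset !sub1set !inE pS qS.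
by rewrite cards0 cardS; lia.
Qed.

Lemma link_large p q :
  p != q -> p \notin S -> q \notin S -> min_codeg k E <= #|link p q|.
Proof.
move=> pq pS qS; have cardW := card_link_base pq pS qS.
apply: leq_trans (min_codeg_le E cardW) _.
by apply: codeg_le_card_nbhd cardW => //; lia.
Qed.

Lemma link_proto_balancer {C D : {set T}} a a' x x' y :
  a \in C -> a' \in C -> x \notin C -> x' \notin C -> y \notin C ->
  x \in link a a' -> x' \in link a a' -> y \in link x x' ->
  AB_proto_balancer k E C D.
Proof.
move=> aC a'C xNC x'NC yNC xL x'L yL.
have [card1 disj1] := link_triple xL.
have [card2 disj2] := link_triple x'L.
have [card3 disj3] := link_triple yL.
have [aa' _ _] := link_fresh xL.
have [xx' _ _] := link_fresh yL.
have neq_sides u v : u \in C -> v \notin C -> (u == v) = false.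
  by move=> uC vNC; apply/negbTE; apply: contraNneq vNC => <-.
have notin_X3 u : u \in C -> (u \in [set x; x'; y]) = false.
  by move=> uC; rewrite !inE !neq_sides.
have X1IX2 : [set a; a'; x] :&: [set a; a'; x'] = [set a; a'].
  have xNX2 : (x \in [set a; a'; x']) = false.
    by rewrite !inE (negbTE xx') !(eq_sym x) !neq_sides.
  by rewrite !setIUl !set1I xNX2 !inE !eqxx ?orbT setU0.
exists S, [set a; a'; x], [set a; a'; x'], [set x; x'; y].
rewrite -!mem_link; split; split=> //.
- by split; rewrite ?X1IX2 ?setIUl ?set1I ?aC ?a'C ?(negbTE xNC) ?(negbTE x'NC)
    ?setU0 cards2 aa'.
- by rewrite !setIUl !set1I (negbTE xNC) (negbTE x'NC) (negbTE yNC) !set0U cards0.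
- by split; rewrite !setIUl !set1I (notin_X3 a aC) (notin_X3 a' a'C) !inE !eqxx
    ?orbT !set0U cards1.
Qed.

Definition links_one_sided (C : {set T}) :=
  forall p q u v, u \in link p q -> v \in link p q -> (u \in C) = (v \in C).

Lemma links_one_sidedC C : links_one_sided C -> links_one_sided (~: C).
Proof. by move=> sidedC p q u v uL vL; rewrite !inE (sidedC _ _ _ _ uL vL). Qed.

Lemma links_one_sided_no_diamond A : ~ AB_diamond k E A (~: A) -> links_one_sided A.
Proof.
move=> noDiamond p q u v uL vL; have [pq pS qS] := link_fresh uL.
exact: nbhd_same_side noDiamond (card_link_base pq pS qS) uL vL.
Qed.

Section Dense.
Hypothesis card_lt : #|T| < 3 * min_codeg k E.

Lemma link_nonempty p q :
  p != q -> p \notin S -> q \notin S -> exists v, v \in link p q.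
Proof. by move=> pq pS qS; apply/card_gt0P; apply: leq_trans (link_large pq pS qS); lia. Qed.

Lemma link_other p q r : r \in link p q -> exists2 r', r' \in link p q & r != r'.
Proof.
move=> rL; have [pq pS qS] := link_fresh rL; have [card3 _] := link_triple rL.
have : 1 < #|link p q|.
  by apply: leq_trans (link_large pq pS qS); have := max_card [set p; q; r]; lia.
rewrite (cardsD1 r) rL add1n ltnS card_gt0 => /set0Pn [r' /setD1P [r'r r'L]].
by exists r'; rewrite // eq_sym.
Qed.

Section Separation.
Variable C : {set T}.
Hypothesis sidedC : links_one_sided C.

Lemma link_subset u p q : u \in link p q -> u \in C -> link p q \subset C.
Proof. by move=> uL uC; apply/subsetP => w wL; rewrite (sidedC wL uL). Qed.

Lemma link_subsetC u p q : u \in link p q -> u \notin C -> link p q \subset ~: C.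
Proof. by move=> uL uNC; apply/subsetP => w wL; rewrite inE (sidedC wL uL). Qed.

Lemma link_disjoint p q q' : (q \in C) != (q' \in C) -> [disjoint link p q & link p q'].
Proof.
move=> qq'; rewrite disjoints_subset; apply/subsetP => w.
rewrite in_setC !(mem_link_swap p _ w) => qL.
by apply: contra qq' => q'L; rewrite (sidedC qL q'L) eqxx.
Qed.

Lemma card_link_pair p q q' u u' :
  u \in link p q -> u' \in link p q' -> (q \in C) != (q' \in C) ->
  2 * min_codeg k E <= #|link p q :|: link p q'|.
Proof.
move=> uL u'L qq'; have [pq pS qS] := link_fresh uL; have [pq' _ q'S] := link_fresh u'L.
rewrite cardsU (disjoint_setI0 (link_disjoint p qq')) cards0 subn0 mul2n -addnn.
by apply: leq_add; apply: link_large.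
Qed.

Lemma separated_link_proto_balancer a a' x :
  a \in C -> a' \in C -> x \notin C -> x \in link a a' -> proto_balancer k E C (~: C).
Proof.
move=> aC a'C xNC xL.
have [x' x'L xx'] := link_other xL.
have x'NC : x' \notin C by rewrite (sidedC x'L xL).
have [y yL] := link_nonempty xx' (link_notin xL) (link_notin x'L).
case: (boolP (y \in C)) => [yC | yNC]; last first.
  by left; apply: link_proto_balancer aC a'C xNC x'NC yNC xL x'L yL.
have [y' y'L yy'] := link_other yL.
have y'C : y' \in C by rewrite (sidedC y'L yL).
have [z zL] := link_nonempty yy' (link_notin yL) (link_notin y'L).
case: (boolP (z \in C)) => [zC | zNC].
  by right; apply: (link_proto_balancer _ _ _ _ _ yL y'L zL); rewrite inE ?negbK.
have a'L : a' \in link x a by rewrite linkC mem_link_swap.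
have x'L' : x' \in link y x by rewrite linkC mem_link_swap.
have sideC : link x a :|: link x x' \subset C.
  by rewrite subUset (link_subset a'L a'C) (link_subset yL yC).
have sideNC : link y y' :|: link y x \subset ~: C.
  by rewrite subUset (link_subsetC zL zNC) (link_subsetC x'L' x'NC).
have := leq_trans (card_link_pair a'L yL _) (subset_leq_card sideC).
have := leq_trans (card_link_pair zL x'L' _) (subset_leq_card sideNC).
rewrite aC (negbTE x'NC) y'C (negbTE xNC) => /(_ isT) cardNC /(_ isT) cardC.
by move: (cardsC C) cardC cardNC card_lt; clear; lia.
Qed.

End Separation.

Lemma cross_pair_proto_balancer C a x :
  links_one_sided C -> a \in C -> x \notin C -> a \notin S -> x \notin S ->
  proto_balancer k E C (~: C).
Proof.
move=> sidedC aC xNC aS xS.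
have ax : a != x by apply: contraNneq xNC => <-.
have [v vL] := link_nonempty ax aS xS.
case: (boolP (v \in C)) => [vC | vNC].
  by apply: (separated_link_proto_balancer sidedC aC vC xNC); rewrite mem_link_swap.
have : proto_balancer k E (~: C) (~: ~: C).
  apply: (separated_link_proto_balancer (links_one_sidedC sidedC) (a := x) (a' := v) (x := a)).
  1-3: by rewrite inE ?negbK.
  by rewrite mem_link_swap linkC.
by rewrite setCK => -[]; [right | left].
Qed.

End Dense.

End Link.

Lemma setC_partition (T : finType) (A B : {set T}) :
  A :&: B = set0 -> A :|: B = setT -> B = ~: A.
Proof.
move=> AB0 ABT; rewrite -setTD -ABT setDUl setDv set0U.
by apply/esym/setDidPl; rewrite -setI_eq0 setIC AB0.
Qed.

Lemma exists_card_subset (T : finType) (B : {set T}) m :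
  m <= #|B| -> exists2 S : {set T}, S \subset B & #|S| = m.
Proof.
move=> m_le; have /card_gt0P [S] : 0 < #|[set S : {set T} | S \subset B & #|S| == m]|.
  by rewrite cards_draws bin_gt0.
by rewrite inE => /andP [sSB /eqP cardS]; exists S.
Qed.

Theorem lemma7p4 (k n : nat) (T : finType) (E : {set {set T}}) (A B : {set T}) :
  3 <= k -> 2 * k - 4 <= n -> #|T| = n ->
  is_kgraph k E ->
  n < 3 * min_codeg k E ->
  A :&: B = set0 -> A :|: B = setT -> 0 < #|A| -> 0 < #|B| ->
  ~ AB_diamond k E A B ->
  proto_balancer k E A B.
Proof.
move=> k_ge3 n_ge cardT kgraphE card_lt AB0 ABT /card_gt0P [a aA] B_gt0 noDiamond.
rewrite -cardT in card_lt n_ge; move: B_gt0 noDiamond; rewrite (setC_partition AB0 ABT).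
move=> /card_gt0P [x]; rewrite inE => xNA noDiamond.
have ax : a != x by apply: contraNneq xNA => <-.
have [S sSax cardS] : exists2 S : {set T}, S \subset ~: [set a; x] & #|S| = k - 3.
  by apply: exists_card_subset; have := cardsC [set a; x]; rewrite cards2 ax; lia.
have [aS xS] : a \notin S /\ x \notin S.
  by split; apply: contraTN isT => /(subsetP sSax); rewrite !inE eqxx ?orbT.
have sidedA := links_one_sided_no_diamond kgraphE k_ge3 cardS noDiamond.
exact: (cross_pair_proto_balancer kgraphE k_ge3 cardS card_lt sidedA aA xNA aS xS).
Qed.
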